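(* Let $q$ be a prime, $A$ a group of exponent $q$ and order $q^3$. Suppose $A$ acts by automorphisms on a finite group $G$ of order coprime to $q$ with $G=PH$, where $P$ and $H$ are $A$-invariant subgroups, $P$ is a normal $p$-subgroup of $G$ for a prime $p$, and $H$ is a nilpotent $p'$-subgroup. If $[C_P(a),C_H(a)]=1$ for every nontrivial $a\in A$, then $[P,H]=1$.
   Context: $C_X(a)$ denotes the fixed points of $a$ in $X$; $[X,Y]$ is the subgroup generated by commutators of elements of $X$ and $Y$. *)

From mathcomp Require Import all_boot all_fingroup all_solvable.
Set Implicit Arguments. Unset Strict Implicit. Unset Printing Implicit Defensive.

(* Minimal counterexample on |P| + |H|.  Quotienting by C_H(P) and by Phi(P)
   (Burnside), passing to the Sylow subgroups of the nilpotent group H and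
   replacing P by [P, H] reduce to: P abelian with C_P(H) = 1, and H an
   elementary abelian r-group without proper nontrivial A-invariant subgroups.  First, an abelian q'-group W acted on
   by x, y of order q with commuting actions is generated by C_W(x) and the
   C_W(y x^i).  Second, let K < H be maximal with C_P(K) <> 1, and let e in A
   not normalise K; for v in C_P(K) and h in C_H(e) the commutator u = [v, h]
   is K-fixed with trivial <e>-trace, and in the K-trace of that <e>-trace the
   terms u^g, g <> 1, vanish because K and K^g generate H; so |K| u = 0 and
   C_H(e) centralises C_P(K).  Finally A is abelian or extraspecial with
   A' = Z(A) of order q; taking x in Z(A) and y outside N_A(K) <x>, every case
   ends with P = 1, H = 1 or C_P(K) = 1 by one of the two tools. *)

From mathcomp Require Import all_boot all_fingroup all_solvable.
From mathcomp Require Import ssralg finmodule zify.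
Set Implicit Arguments. Unset Strict Implicit. Unset Printing Implicit Defensive.
Import GroupScope GRing.Theory FiniteModule.
Local Notation "u ^@ x" := (actr u x) : group_scope.

Lemma mulmod_inj q j (q_gt0 : 0 < q) : coprime q j ->
  injective (fun i : 'I_q => Ordinal (ltn_pmod (i * j) q_gt0)).
Proof.
move=> co_qj i i' /(congr1 val) /= eq_ij; apply: val_inj => /=.
wlog le_i'i : i i' eq_ij / i' <= i.
  by move=> IH; case: (leqP i' i) => [|/ltnW] le; [|symmetry]; apply: IH.
have: q %| (i - i') * j by rewrite mulnBl -eqn_mod_dvd ?leq_mul2r ?le_i'i ?orbT ?eq_ij.
rewrite Gauss_dvdl // => /dvdn_leq; have := ltn_ord i; lia.
Qed.

Lemma sumr_ord_mulmod (M : zmodType) q j (F : nat -> M) : 0 < q -> coprime q j ->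
  (forall n, F (n %% q) = F n) -> (\sum_(i < q) F (i * j)%N = \sum_(i < q) F i)%R.
Proof.
move=> q_gt0 co_qj Fmod; rewrite [RHS](reindex_inj (@mulmod_inj q j q_gt0 co_qj)) /=.
by apply: eq_bigr => i _; rewrite Fmod.
Qed.

Section FiniteModuleTrace.
Variables (gT : finGroupType) (W : {group gT}) (abW : abelian W).
Implicit Types (u v : fmod_of abW) (X : {group gT}).
Local Open Scope ring_scope.

Lemma fmval_cent1P u g :
  g \in 'N(W) -> reflect (u ^@ g = u) (fmval u \in 'C[g]).
Proof.
move=> nWg; apply: (iffP cent1P) => [/commgP/conjg_fixP | ug].
  by rewrite -fmvalJ // => /val_inj.
by apply/commgP/conjg_fixP; rewrite -fmvalJ // ug.
Qed.

Lemma fmval_sub_cent u X :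
  X \subset 'N(W) -> {in X, forall x, u ^@ x = u} -> fmval u \in 'C_W(X).
Proof.
move=> nWX fixX; rewrite inE fmodP; apply/centP => x Xx.
by apply/cent1P/(fmval_cent1P _ (subsetP nWX x Xx))/fixX.
Qed.

Lemma coprime_fmod_eq0 u n : coprime #|W| n -> u *+ n = 0 -> u = 0.
Proof.
move=> coWn /(congr1 fmval); rewrite fmvalZ fmval0 => un1.
by apply: val_inj; rewrite fmval0 -(expgK coWn (fmodP u)) un1 expg1n.
Qed.

Lemma fmval_sum_group (L : {group gT}) (I : finType) (r : pred I) (F : I -> fmod_of abW) :
  (forall i, r i -> fmval (F i) \in L) -> fmval (\sum_(i | r i) F i) \in L.
Proof.
move=> FL; elim/big_rec: _ => [|i v ri Lv]; first by rewrite fmval0.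
by rewrite fmvalA groupM ?FL.
Qed.

Definition fmtrace (X : {set gT}) u := \sum_(x in X) u ^@ x.

Lemma fmtraceJ X u x : X \subset 'N(W) -> x \in X -> fmtrace X u ^@ x = fmtrace X u.
Proof.
move=> nWX Xx; rewrite actr_sum [RHS](reindex_inj (mulIg x)) /=.
apply: eq_big => [y | y Xy]; first by rewrite groupMr.
by rewrite actrM ?(subsetP nWX).
Qed.

Lemma fmtrace_cent X u : X \subset 'N(W) -> fmval (fmtrace X u) \in 'C_W(X).
Proof. by move=> nWX; apply: fmval_sub_cent => // x; apply: fmtraceJ. Qed.

Lemma fmtraceJC (X : {set gT}) u y : X \subset 'N(W) -> y \in 'N(W) ->
  X \subset 'C[y] -> fmtrace X u ^@ y = fmtrace X (u ^@ y).
Proof.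
move=> nWX nWy cXy; rewrite actr_sum; apply: eq_bigr => x Xx.
have nWx := subsetP nWX x Xx.
by rewrite -!actrM // (cent1P (subsetP cXy x Xx)).
Qed.

Lemma fmtrace_fixed (X : {set gT}) u :
  {in X, forall x, u ^@ x = u} -> fmtrace X u = u *+ #|X|.
Proof. by move=> fixX; rewrite /fmtrace (eq_bigr _ fixX) sumr_const. Qed.

Lemma fmtraceB (X : {set gT}) u v : fmtrace X (u - v) = fmtrace X u - fmtrace X v.
Proof. by rewrite -sumrB; apply: eq_bigr => x _; rewrite actAr actNr. Qed.

End FiniteModuleTrace.

Section CoprimeAbelianCent1Gen.
Variables (gT : finGroupType) (W : {group gT}) (q : nat) (x y : gT).
Hypotheses (abW : abelian W) (q_pr : prime q) (coWq : coprime #|W| q).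
Hypotheses (nWx : x \in 'N(W)) (nWy : y \in 'N(W)) (xq : x ^+ q = 1) (yq : y ^+ q = 1).
Hypothesis cWxy : [~ x, y] \in 'C(W).

Local Notation pow_trace g v := (\sum_(k < q) v ^@ (g ^+ k))%R.

Lemma conjg_swap w : w \in W -> (w ^ x) ^ y = (w ^ y) ^ x.
Proof.
move=> Ww; have Wwyx : w ^ (y * x) \in W by rewrite memJ_norm ?groupM.
rewrite -!conjgM commgC conjgM.
by apply/conjg_fixP/commgP/commute_sym; apply: (centP cWxy).
Qed.

Lemma conjgX_swap w k : w \in W -> (w ^ x ^+ k) ^ y = (w ^ y) ^ x ^+ k.
Proof.
elim: k w => [|k IHk] w Ww; first by rewrite !conjg1.
by rewrite expgS !conjgM IHk ?memJ_norm // conjg_swap.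
Qed.

Lemma conjg_expg_mulX w i j :
  w \in W -> w ^ ((y * x ^+ i) ^+ j) = w ^ (y ^+ j * x ^+ (i * j)).
Proof.
move=> Ww; elim: j => [|j IHj]; first by rewrite muln0 !mulg1.
rewrite expgSr conjgM IHj !conjgM conjgX_swap ?memJ_norm ?groupX //.
by rewrite expgSr mulnS addnC expgD !conjgM.
Qed.

Lemma fmval_pow_trace_cent1 (v : fmod_of abW) g : g \in 'N(W) ->
  {in W, forall w, w ^ (g ^+ q) = w} -> fmval (pow_trace g v) \in 'C_W[g].
Proof.
move=> nWg fixW; rewrite inE fmodP; apply/fmval_cent1P => //.
rewrite actr_sum; under eq_bigr => k _ do rewrite -actrM ?groupX // -expgSr.
rewrite -(prednK (prime_gt0 q_pr)) [LHS]big_ord_recr [RHS]big_ord_recl /=.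
rewrite prednK ?prime_gt0 // addrC; congr (_ + _)%R.
by apply: val_inj; rewrite !fmvalJ ?groupX // fixW ?fmodP ?conjg1.
Qed.

(* (y x^i)^j acts on W as y^j x^(ij), and for j != 0 the map i |-> ij permutes
   Z/q, so the terms with j != 0 regroup into x-traces. *)
Lemma pow_trace_pair_decomposition w : w \in W ->
  let u := fmod abW w in
  (u *+ q = \sum_(i < q) pow_trace (y * x ^+ i) u
           - \sum_(j < q | j != 0 :> nat) pow_trace x (fmod abW (w ^ (y ^+ j))))%R.
Proof.
move=> Ww u; have q_gt0 := prime_gt0 q_pr.
apply/eqP; rewrite eq_sym subr_eq; apply/eqP.
rewrite exchange_big /= (bigD1 (Ordinal q_gt0)) //=; congr (_ + _)%R.
  by under eq_bigr => i _ do rewrite act1; rewrite sumr_const card_ord.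
apply: eq_bigr => j nz_j.
have co_qj : coprime q j.
  rewrite prime_coprime // gtnNdvd ?ltn_ord // lt0n.
  by apply: contra nz_j => /eqP j0; apply/eqP/val_inj.
pose F n := (fmod abW (w ^ (y ^+ j)) ^@ (x ^+ n))%R.
rewrite -(@sumr_ord_mulmod _ q j F q_gt0 co_qj) => [|n]; last by rewrite /F expg_mod.
apply: eq_bigr => i _.
have nWyxj : (y * x ^+ i) ^+ j \in 'N(W) by rewrite groupX // groupM // groupX.
by rewrite /F /u -fmodJ // conjg_expg_mulX // conjgM fmodJ ?groupX.
Qed.

Lemma cent1_pair_gen_sub (L : {group gT}) :
  'C_W[x] \subset L -> (forall i, 'C_W[y * x ^+ i] \subset L) -> W \subset L.
Proof.
move=> sCxL sCyxL; apply/subsetP => w Ww.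
suff: fmval (fmod abW w *+ q)%R \in L.
  by rewrite fmvalZ fmodK // -{2}(expgK coWq Ww) => /groupX->.
rewrite pow_trace_pair_decomposition // fmvalA fmvalN groupM ?groupV //.
  apply: fmval_sum_group => i _; apply: (subsetP (sCyxL i)); apply: fmval_pow_trace_cent1.
    by rewrite groupM ?groupX.
  by move=> w' Ww'; rewrite conjg_expg_mulX // yq mul1g mulnC expgM xq expg1n conjg1.
apply: fmval_sum_group => j _; apply: (subsetP sCxL); apply: fmval_pow_trace_cent1 => // w' _.
by rewrite xq conjg1.
Qed.

End CoprimeAbelianCent1Gen.

Section TraceOverConjugates.
Variables (gT : finGroupType) (P H K : {group gT}) (e : gT).
Hypotheses (abP : abelian P) (abH : abelian H) (sKH : K \subset H) (nPH : H \subset 'N(P)).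
Hypotheses (coPK : coprime #|P| #|K|) (tiCPH : 'C_P(H) = 1).
Hypothesis maxK : forall h, h \in H -> h \notin K -> H \subset K <*> <[h]>.
Hypotheses (nPe : e \in 'N(P)) (nHe : e \in 'N(H)) (e_pr : prime #[e]) (nKe : e \notin 'N(K)).

Local Notation tr := (@fmtrace _ _ abP).

Let nKP : K \subset 'N(P) := subset_trans sKH nPH.

Lemma join_conj_sub g : g \in 'N(H) -> g \notin 'N(K) -> H \subset K <*> (K :^ g)%G.
Proof.
move=> nHg nKg; have sKgH : K :^ g \subset H by rewrite -(normP nHg) conjSg.
have [k' Kgk' notKk'] : exists2 k', k' \in K :^ g & k' \notin K.
  by apply/subsetPn; apply: contra nKg => sKgK; rewrite inE.
apply: subset_trans (maxK (subsetP sKgH k' Kgk') notKk') _.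
by rewrite genS // setUS // cycle_subG.
Qed.

(* The trace is fixed by K, and also by K^g since H is abelian; by the maximality
   of K these two subgroups generate H, and C_P(H) = 1. *)
Lemma fmtrace_conj_eq0 u g : {in K, forall k, u ^@ k = u} ->
  g \in 'N(P) -> g \in 'N(H) -> g \notin 'N(K) -> tr K (u ^@ g) = 0%R.
Proof.
move=> fixK nPg nHg nKg; suff: fmval (tr K (u ^@ g)) \in 'C_P(H).
  by rewrite tiCPH => /set1P trK1; apply: fmod_inj; rewrite trK1.
apply: (subsetP (setIS P (centS (join_conj_sub nHg nKg)))).
rewrite centY setIA inE fmtrace_cent ?nKP //=.
suff /setIP[] : fmval (tr K (u ^@ g)) \in 'C_P(K :^ g) by [].
apply: fmval_sub_cent => [|_ /imsetP[k Kk ->]]; first exact: conj_subG nPg nKP.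
have nPk := subsetP nKP k Kk; have nPkg : k ^ g \in 'N(P) by rewrite groupJ.
have Hkg : k ^ g \in H by rewrite memJ_norm ?(subsetP sKH).
rewrite fmtraceJC ?nKP //; last by rewrite sub_cent1 (subsetP (centS sKH)) ?(subsetP abH).
by rewrite -actrM // -conjgC actrM // fixK.
Qed.

Lemma fmtrace_cycle_fixed_eq0 u :
  {in K, forall k, u ^@ k = u} -> tr <[e]> u = 0%R -> u = 0%R.
Proof.
move=> fixK tr_u0; apply: (coprime_fmod_eq0 coPK).
have ->: (u *+ #|K| = \sum_(g in <[e]>) tr K (u ^@ g))%R.
  rewrite (bigD1 1) ?group1 //= act1 fmtrace_fixed // big1 ?addr0 // => g /andP[Eg ntg].
  have sgN (X : {group gT}) : e \in 'N(X) -> g \in 'N(X) by rewrite -cycle_subG => /subsetP->.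
  have defE : <[e]> :=: <[g]> by apply: nt_gen_prime; [apply: e_pr | rewrite in_setD1 ntg].
  apply: fmtrace_conj_eq0 (sgN _ nPe) (sgN _ nHe) _ => //.
  by apply: contra nKe; rewrite -!cycle_subG defE.
rewrite /fmtrace exchange_big big1 //= => k _.
by move: tr_u0; rewrite /fmtrace -actr_sum => ->; apply: act0r.
Qed.

Lemma subcent1_cent_subcent :
  [~: 'C_P[e], 'C_H[e]] = 1 -> 'C_H[e] \subset 'C('C_P(K)).
Proof.
move=> cCPCH; apply/subsetP => h /setIP[Hh cEh]; apply/centP => v /setIP[Pv cKv].
have nPh := subsetP nPH h Hh; have sEN : <[e]> \subset 'N(P) by rewrite cycle_subG.
(* u is the commutator [v, h], written additively; its <e>-trace vanishes because
   h centralises the <e>-trace of v, an element of C_P(e). *)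
pose u := (fmod abP (v ^ h) - fmod abP v)%R.
have fixKv : {in K, forall k, fmod abP v ^@ k = fmod abP v}.
  move=> k Kk; apply/fmval_cent1P; rewrite ?(subsetP nKP) ?fmodK //.
  exact/cent1P/(centP cKv).
have fixKu : {in K, forall k, u ^@ k = u}.
  move=> k Kk; have nPk := subsetP nKP k Kk.
  have cKh : commute h k := centsP abH h Hh k (subsetP sKH k Kk).
  by rewrite /u actAr actNr fmodJ // -actrM // cKh actrM // fixKv.
suff /eqP: u = 0%R.
  by rewrite subr_eq0 fmodJ // => /eqP/(fmval_cent1P _ nPh); rewrite fmodK // => /cent1P.
apply: fmtrace_cycle_fixed_eq0 => //.
rewrite fmtraceB fmodJ // -fmtraceJC //; last by rewrite cycle_subG cent1C.
have: [~ fmval (tr <[e]> (fmod abP v)), h] \in [~: 'C_P[e], 'C_H[e]].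
  by apply: mem_commg; [rewrite -cent_cycle fmtrace_cent | rewrite inE Hh].
by rewrite cCPCH => /set1P/eqP/commgP/cent1P/(fmval_cent1P _ nPh)->; apply: subrr.
Qed.

End TraceOverConjugates.

Lemma exists_notin_card_lt (T : finType) (A X : {set T}) :
  #|X| < #|A| -> exists2 y, y \in A & y \notin X.
Proof.
by move=> ltXA; apply/subsetPn; apply: contraTN ltXA => /subset_leq_card; rewrite leqNgt.
Qed.

Lemma mulg_cycle_notin (gT : finGroupType) (S : {set gT}) x y i :
  y \notin S * <[x]> -> y * x ^+ i \notin S.
Proof. by apply: contra => Syx; rewrite -(mulgK (x ^+ i) y) mem_mulg ?groupV ?mem_cycle. Qed.

Lemma card_mulG_le (gT : finGroupType) (X Y : {group gT}) : #|X * Y| <= #|X| * #|Y|.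
Proof. by rewrite mul_cardG leq_pmulr ?cardG_gt0. Qed.

Section PrimeExponentCube.
Variables (gT : finGroupType) (q : nat) (A : {group gT}).
Hypotheses (q_pr : prime q) (expA : exponent A = q) (oA : #|A| = (q ^ 3)%N).

Let q_gt1 : 1 < q := prime_gt1 q_pr.

Lemma expg_exponent_prime a : a \in A -> a ^+ q = 1.
Proof. by rewrite -expA; apply: expg_exponent. Qed.

Lemma leq_order_exponent_prime a : a \in A -> #[a] <= q.
Proof. by move=> Aa; rewrite dvdn_leq ?prime_gt0 // -expA dvdn_exponent. Qed.

Lemma pgroup_exponent_prime : q.-group A.
Proof. by rewrite /pgroup oA pnatX pnat_id. Qed.

Lemma exists_commuting_pair (D : {group gT}) : D \subset A -> (q ^ 2 <= #|D|)%N ->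
  exists x y, [/\ x \in D, y \in D, x != 1, commute x y & y \notin <[x]>].
Proof.
move=> sDA leD; have qD := pgroupS sDA pgroup_exponent_prime.
have ntD : D :!=: 1.
  by apply: contraTneq leD => ->; rewrite cards1 -ltnNge (ltn_exp2l 0) ?q_gt1.
have /trivgPn[x /setIP[Dx cDx] ntx] : 'Z(D) != 1 by rewrite center_nil_eq1 ?(pgroup_nil qD).
have [y Dy notxy] : exists2 y, y \in D & y \notin <[x]>.
  apply: exists_notin_card_lt; apply: leq_trans leD; rewrite -orderE.
  apply: leq_ltn_trans (leq_order_exponent_prime (subsetP sDA x Dx)) _.
  by rewrite -{1}(expn1 q) ltn_exp2l.
by exists x, y; split=> //; apply: (centP cDx).
Qed.

Lemma exists_pair_outside_cycle x : x \in A ->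
  exists c a, [/\ c \in A, a \in A, c \notin <[x]> & a \notin <[x]> * <[c]>].
Proof.
move=> Ax; have le_x := leq_order_exponent_prime Ax.
have [c Ac notxc] : exists2 c, c \in A & c \notin <[x]>.
  apply: exists_notin_card_lt; rewrite oA -orderE (leq_ltn_trans le_x) //.
  by rewrite -{1}(expn1 q) ltn_exp2l.
have [a Aa notxca] : exists2 a, a \in A & a \notin <[x]> * <[c]>.
  apply: exists_notin_card_lt; rewrite oA (leq_ltn_trans (card_mulG_le _ _)) //.
  rewrite -!orderE (leq_ltn_trans (leq_mul le_x (leq_order_exponent_prime Ac))) //.
  by rewrite mulnn ltn_exp2l.
by exists c, a.
Qed.

Lemma der1_sub_cycle_center x : x \in 'Z(A) -> x != 1 -> A^`(1) \subset <[x]>.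
Proof.
move=> Zx ntx; have [cAA|ncAA] := boolP (abelian A).
  by rewrite (derG1P cAA) sub1G.
have logA : logn q #|A| <= 3 by rewrite oA pfactorK.
have [[_ ->] Z_pr] := p3group_extraspecial pgroup_exponent_prime ncAA logA.
by rewrite (nt_gen_prime (x := x) Z_pr) // in_setD1 ntx.
Qed.

Lemma card_proper_meet_center_trivial (S : {group gT}) :
  S \proper A -> S :&: 'Z(A) = 1 -> (#|S| <= q)%N.
Proof.
move=> ltSA tiSZ; have sSA := proper_sub ltSA.
have: #|S| %| q ^ 3 by rewrite -oA cardSg.
case/(dvdn_pfactor _ _ q_pr) => -[|[|[|m]]] le_m3 oS; rewrite oS ?expn1 ?prime_gt0 //.
  have iS : #|A : S| = q.
    by apply/eqP; rewrite -(eqn_pmul2l (cardG_gt0 S)) Lagrange // oA oS -expnSr.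
  have mSA : maximal S A by rewrite p_index_maximal // iS.
  have nSA := p_maximal_normal pgroup_exponent_prime mSA.
  have ntS : S :!=: 1 by rewrite -cardG_gt1 oS (ltn_exp2l 0).
  by have := meet_center_nil (pgroup_nil pgroup_exponent_prime) nSA ntS; rewrite tiSZ eqxx.
case: m le_m3 oS => // _ oS; by move: (proper_card ltSA); rewrite oS oA ltnn.
Qed.

Lemma exists_center_coset_notin (S : {group gT}) : S \proper A ->
  exists x y, [/\ x \in 'Z(A), x != 1, y \in A & y \notin S * <[x]>].
Proof.
move=> ltSA; have sSA := proper_sub ltSA.
have [tiSZ | /trivgPn[x /setIP[Sx Zx] ntx]] := eqVneq (S :&: 'Z(A)) 1; last first.
  have [y Ay notSy] := exists_notin_card_lt (proper_card ltSA).
  by exists x, y; rewrite mulGSid ?cycle_subG.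
have ntA : A :!=: 1 by rewrite -cardG_gt1 oA (ltn_exp2l 0).
have /trivgPn[x Zx ntx] : 'Z(A) != 1 by rewrite center_nil_eq1 ?(pgroup_nil pgroup_exponent_prime).
have [y Ay notSxy] : exists2 y, y \in A & y \notin S * <[x]>.
  apply: exists_notin_card_lt; rewrite (leq_ltn_trans (card_mulG_le _ _)) // -orderE oA.
  have le_x := leq_order_exponent_prime (subsetP (center_sub A) x Zx).
  rewrite (leq_ltn_trans (leq_mul (card_proper_meet_center_trivial ltSA tiSZ) le_x)) //.
  by rewrite mulnn ltn_exp2l.
by exists x, y.
Qed.

Lemma card_cent_prime_order (X : {group gT}) :
  prime #|X| -> A \subset 'N(X) -> (q ^ 2 <= #|'C_A(X)|)%N.
Proof.
move=> X_pr nXA; pose f := conj_aut X.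
have cyc_fA : cyclic (f @* A) := cyclicS (Aut_conj_aut X A) (Aut_prime_cyclic X_pr).
have le_fA : (#|f @* A| <= q)%N.
  by rewrite -(exponent_cyclic cyc_fA) dvdn_leq ?prime_gt0 // -expA exponent_morphim.
rewrite card_morphim ker_conj_aut (setIidPr nXA) -indexgI in le_fA.
rewrite -(leq_pmul2r (prime_gt0 q_pr)) -expnSr -oA -(Lagrange (subsetIl A 'C(X))).
by rewrite leq_mul2l le_fA orbT.
Qed.

End PrimeExponentCube.

Section MaximalFixedSubgroup.
Variables (gT : finGroupType) (r : nat) (P H : {group gT}).
Hypotheses (r_pr : prime r) (abP : abelian P) (abelH : r.-abelem H).
Hypotheses (nPH : H \subset 'N(P)) (coPr : coprime #|P| r) (ntP : P :!=: 1).

Lemma subcent_join_cycle (X : {group gT}) h : 'C_P(X <*> <[h]>) = 'C_('C_P(X))[h].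
Proof. by rewrite centY cent_cycle setIA. Qed.

Lemma exists_max_fixed_subgroup : exists K : {group gT},
  [/\ K \subset H, 'C_P(K) != 1 & forall h, h \in H -> h \notin K -> H \subset K <*> <[h]>].
Proof.
have [abH expH] := abelemP r_pr abelH.
pose fixed (K : {group gT}) := (K \subset H) && ('C_P(K) != 1).
have fixed1 : fixed 1%G by rewrite /fixed sub1G cent1T setIT.
have [K /maxgroupP[/andP[sKH ntCK] maxK] _] := maxgroup_exists fixed1.
have cent_join_eq1 h : h \in H -> h \notin K -> 'C_P(K <*> <[h]>) = 1.
  move=> Hh notKh; apply/eqP; apply: contraNT notKh => ntC.
  have sKhH : K <*> <[h]> \subset H by rewrite join_subG sKH cycle_subG.
  by rewrite -(maxK _ _ (joing_subl K <[h]>)) ?mem_gen ?inE ?cycle_id ?orbT //; apply/andP.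
exists K; split=> // h Hh notKh; apply/subsetP => y Hy; apply/negPn/negP => notKhy.
have abW : abelian 'C_P(K) := abelianS (subsetIl _ _) abP.
have nWH : H \subset 'N('C_P(K)) by rewrite normsI // norms_cent // sub_abelian_norm.
case/negP: ntCK; rewrite -subG1.
apply: (cent1_pair_gen_sub abW r_pr (coprimeSg (subsetIl _ _) coPr)
  (subsetP nWH h Hh) (subsetP nWH y Hy) (expH h Hh) (expH y Hy)).
- by have /commgP/eqP-> := centsP abH h Hh y Hy; apply: group1.
- by rewrite -subcent_join_cycle cent_join_eq1.
move=> i; have Hyhi : y * h ^+ i \in H by rewrite groupM ?groupX.
rewrite -subcent_join_cycle cent_join_eq1 //; apply: contra notKhy => Kyhi.
by rewrite -(mulgK (h ^+ i) y) groupM ?groupV ?mem_gen ?inE ?Kyhi ?mem_cycle ?orbT.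
Qed.

End MaximalFixedSubgroup.

Section CriticalConfiguration.
Variables (gT : finGroupType) (q r : nat) (A P H : {group gT}).
Hypotheses (q_pr : prime q) (expA : exponent A = q) (oA : #|A| = (q ^ 3)%N).
Hypotheses (r_pr : prime r) (abP : abelian P) (abelH : r.-abelem H).
Hypotheses (coPH : coprime #|P| #|H|) (coPq : coprime #|P| q) (coHq : coprime #|H| q).
Hypotheses (nPA : A \subset 'N(P)) (nHA : A \subset 'N(H)) (nPH : H \subset 'N(P)).
Hypotheses (tiCPH : 'C_P(H) = 1) (ntP : P :!=: 1).
Hypothesis minH :
  forall H1 : {group gT}, H1 \subset H -> A \subset 'N(H1) -> H1 :!=: H -> H1 :=: 1.
Hypothesis cCPCH : forall a, a \in A^# -> [~: 'C_P[a], 'C_H[a]] = 1.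

Let abH : abelian H := abelem_abelian abelH.
Let ntH : H :!=: 1.
Proof. by apply: contraNneq ntP => H1; rewrite -tiCPH H1 cent1T setIT. Qed.

Lemma subcent1_eq1 a : a \in A -> a != 1 -> a \in 'C(H) -> 'C_P[a] = 1.
Proof.
move=> Aa nta cHa; apply/trivgP; rewrite -tiCPH subsetI subsetIl /=.
apply/commG1P; rewrite -(setIidPl (_ : H \subset 'C[a])) ?sub_cent1 //.
by apply: cCPCH; rewrite !inE nta.
Qed.

Lemma commuting_pair_cent_false x y : x \in A -> y \in A -> x != 1 ->
  commute x y -> y \notin <[x]> -> x \in 'C(H) -> y \in 'C(H) -> False.
Proof.
move=> Ax Ay ntx cxy notxy cHx cHy; case/negP: ntP; rewrite -subG1.
apply: (cent1_pair_gen_sub abP q_pr coPq (subsetP nPA x Ax) (subsetP nPA y Ay)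
  (expg_exponent_prime expA Ax) (expg_exponent_prime expA Ay)).
- by move/commgP/eqP: cxy => ->; apply: group1.
- by rewrite subcent1_eq1.
have notxy1 : y \notin 1 * <[x]> by rewrite mul1g.
move=> i; rewrite subcent1_eq1 ?groupM ?groupX //.
by have := mulg_cycle_notin i notxy1; rewrite inE.
Qed.

Lemma subcent1_eq1_notin_cycle x e : x \in 'Z(A) -> x != 1 -> A^`(1) \subset <[x]> ->
  H \subset 'C[x] -> e \in A -> e \notin <[x]> -> 'C_H[e] = 1.
Proof.
move=> /setIP[Ax cAx] ntx sA'x cHx Ae notxe; pose B := (<[x]> <*> <[e]>)%G.
have sBA : B \subset A by rewrite join_subG !cycle_subG Ax Ae.
have nCA : A \subset 'N('C_H(B)).
  rewrite normsI ?norms_cent // normal_norm // sub_der1_normal //.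
  exact: subset_trans sA'x (joing_subl _ _).
have ->: 'C_H[e] = 'C_H(B) by rewrite centY !cent_cycle setIA (setIidPl cHx).
have [cHB | ltCH] := eqVneq 'C_H(B) H; last exact: minH (subsetIl _ _) nCA ltCH.
have cBH : B \subset 'C(H) by rewrite centsC -cHB subsetIr.
have [cHx' cHe] : x \in 'C(H) /\ e \in 'C(H).
  by split; apply: (subsetP cBH); rewrite mem_gen // inE cycle_id ?orbT.
by case: (commuting_pair_cent_false Ax Ae ntx (centP cAx e Ae) notxe cHx' cHe).
Qed.

Lemma center_cent_false x : x \in 'Z(A) -> x != 1 -> A^`(1) \subset <[x]> ->
  H \subset 'C[x] -> False.
Proof.
move=> Zx ntx sA'x cHx; have Ax := subsetP (center_sub A) x Zx.
have [c [a [Ac Aa notxc notxca]]] := exists_pair_outside_cycle q_pr expA oA Ax.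
case/negP: ntH; rewrite -subG1.
apply: (cent1_pair_gen_sub abH q_pr coHq (subsetP nHA c Ac) (subsetP nHA a Aa)
  (expg_exponent_prime expA Ac) (expg_exponent_prime expA Aa)).
- have cHX : <[x]> \subset 'C(H) by rewrite cycle_subG -sub_cent1.
  by apply: (subsetP cHX); apply: (subsetP sA'x); rewrite mem_commg.
- by rewrite (subcent1_eq1_notin_cycle Zx).
move=> i; have Aaci : a * c ^+ i \in A by rewrite groupM ?groupX.
by rewrite (subcent1_eq1_notin_cycle Zx) // mulg_cycle_notin.
Qed.

Section MaximalFixed.
Variable K : {group gT}.
Hypotheses (sKH : K \subset H) (ntCK : 'C_P(K) != 1).
Hypothesis maxK : forall h, h \in H -> h \notin K -> H \subset K <*> <[h]>.

Lemma max_fixed_not_normalised : ~~ (A \subset 'N(K)).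
Proof.
apply/negP => nKA; have K1 : K :=: 1.
  by apply: minH sKH nKA _; apply: contraNneq ntCK => ->; rewrite tiCPH.
have [h Hh nth] := trivgPn _ ntH.
have defH : H :=: <[h]>.
  apply/eqP; rewrite eqEsubset cycle_subG Hh andbT.
  by rewrite -(joing1G <[h]>) -K1 maxK // K1 inE.
have oH : #|H| = r by apply: cyclic_abelem_prime abelH _ ntH; rewrite defH cycle_cyclic.
have H_pr : prime #|H| by rewrite oH.
have [x [y [/setIP[Ax cHx] /setIP[Ay cHy] ntx cxy notxy]]] :=
  exists_commuting_pair q_pr expA oA (subsetIl A 'C(H))
    (card_cent_prime_order q_pr expA oA H_pr nHA).
exact: commuting_pair_cent_false Ax Ay ntx cxy notxy cHx cHy.
Qed.

Lemma center_not_cent_false x y : x \in 'Z(A) -> y \in A ->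
  (forall i, y * x ^+ i \notin 'N(K)) -> ~~ (H \subset 'C[x]) -> False.
Proof.
move=> /setIP[Ax cAx] Ay notNK ncHx.
have nCA : A \subset 'N('C_H[x]).
  by rewrite normsI // (subset_trans _ (normG 'C[x]%G)) // sub_cent1.
have CHx1 : 'C_H[x] = 1.
  by apply: minH (subsetIl _ _) nCA _; apply: contraNneq ncHx => <-; apply: subsetIr.
case/negP: ntCK; rewrite -subG1 -tiCPH subsetI subsetIl centsC /=.
suff: H \subset 'C_H('C_P(K)) by rewrite subsetI => /andP[].
apply: (cent1_pair_gen_sub abH q_pr coHq (subsetP nHA x Ax) (subsetP nHA y Ay)
  (expg_exponent_prime expA Ax) (expg_exponent_prime expA Ay)).
- by have /commgP/eqP-> := centP cAx y Ay; apply: group1.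
- by rewrite CHx1 sub1G.
move=> i; set e := y * x ^+ i; have Ae : e \in A by rewrite groupM ?groupX.
have nte : e != 1 by apply: contraNneq (notNK i); rewrite -/e => ->; apply: group1.
rewrite subsetI subsetIl /=; apply: subcent1_cent_subcent (notNK i) _ => //.
- exact: coprimegS sKH coPH.
- exact: subsetP nPA e Ae.
- exact: subsetP nHA e Ae.
- by rewrite (nt_prime_order q_pr (expg_exponent_prime expA Ae) nte).
by apply: cCPCH; rewrite !inE nte.
Qed.

End MaximalFixed.

Lemma critical_configuration_false : False.
Proof.
have [_ r_dvdH _] := pgroup_pdiv (abelem_pgroup abelH) ntH.
have [K [sKH ntCK maxK]] :=
  exists_max_fixed_subgroup r_pr abP abelH nPH (coprime_dvdr r_dvdH coPH) ntP.
have ltNA : 'N_A(K) \proper A.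
  rewrite properEneq subsetIl andbT; apply: contraNneq (max_fixed_not_normalised sKH ntCK maxK).
  by move <-; apply: subsetIr.
have [x [y [Zx ntx Ay notNxy]]] := exists_center_coset_notin q_pr expA oA ltNA.
have [cHx | ncHx] := boolP (H \subset 'C[x]).
  exact: center_cent_false Zx ntx (der1_sub_cycle_center q_pr oA Zx ntx) cHx.
apply: (center_not_cent_false sKH ntCK maxK Zx Ay) ncHx => i.
by have := mulg_cycle_notin i notNxy; rewrite inE groupM ?groupX // (subsetP (center_sub A)).
Qed.

End CriticalConfiguration.

Lemma coprime_commg_sub_Phi (gT : finGroupType) (p : nat) (P H : {group gT}) :
  p.-group P -> H \subset 'N(P) -> coprime #|P| #|H| ->
  [~: P, H] \subset 'Phi(P) -> [~: P, H] = 1.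
Proof.
move=> pP nPH coPH sRPhi; set R := [~: P, H].
have sRP : R \subset P by rewrite commg_subl.
have nRP : P \subset 'N(R) := commg_norml P H.
have nRH : H \subset 'N(R) := commg_normr H P.
have solR : solvable R := nilpotent_sol (pgroup_nil (pgroupS sRP pP)).
have := coprime_norm_quotient_cent nPH nRH (coprimeSg sRP coPH) solR.
rewrite (setIidPl (quotient_cents2r (subxx R))) => defPR.
have sP_RC : P \subset R * 'C_P(H) by rewrite -quotientSK // defPR.
have defP : 'Phi(P) <*> 'C_P(H) = P.
  apply/eqP; rewrite eqEsubset join_subG Phi_sub subsetIl /=.
  by apply: subset_trans sP_RC _; rewrite mul_subG ?joing_subr // (subset_trans sRPhi) ?joing_subl.
by apply/commG1P; rewrite -(Phi_nongen defP) genGid subsetIr.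
Qed.

Record commuting_fixed_action (gT : finGroupType) (q p : nat) (A P H : {group gT}) :
    Prop := CommutingFixedAction {
  cfa_q_prime : prime q;
  cfa_exponent : exponent A = q;
  cfa_card : #|A| = (q ^ 3)%N;
  cfa_coprimeP : coprime #|P| q;
  cfa_coprimeH : coprime #|H| q;
  cfa_normAP : A \subset 'N(P);
  cfa_normAH : A \subset 'N(H);
  cfa_normHP : H \subset 'N(P);
  cfa_p_prime : prime p;
  cfa_pgroup : p.-group P;
  cfa_nilpotent : nilpotent H;
  cfa_p'group : p^'.-group H;
  cfa_fixed_commute : forall a, a \in A^# -> [~: 'C_P[a], 'C_H[a]] = 1
}.

Lemma commuting_fixed_actionS (gT : finGroupType) q p (A P H P1 H1 : {group gT}) :
    commuting_fixed_action q p A P H -> P1 \subset P -> H1 \subset H ->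
    A \subset 'N(P1) -> A \subset 'N(H1) -> H1 \subset 'N(P1) ->
  commuting_fixed_action q p A P1 H1.
Proof.
case=> q_pr expA oA coPq coHq _ _ _ p_pr pP nilH p'H cCPCH sP1 sH1 nP1A nH1A nP1H1.
split=> //; [exact: coprimeSg sP1 coPq | exact: coprimeSg sH1 coHq | exact: pgroupS sP1 pP
  | exact: nilpotentS sH1 nilH | exact: pgroupS sH1 p'H | ].
by move=> a Aa; apply/trivgP; rewrite -(cCPCH a Aa) commgSS ?setSI.
Qed.

Lemma commuting_fixed_action_quotient (gT : finGroupType) q p (A P H N : {group gT}) :
    commuting_fixed_action q p A P H -> coprime #|N| q -> solvable N ->
    P \subset 'N(N) -> H \subset 'N(N) -> A \subset 'N(N) ->
  commuting_fixed_action q p (A / N) (P / N) (H / N).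
Proof.
case=> q_pr expA oA coPq coHq nPA nHA nPH p_pr pP nilH p'H cCPCH coNq solN nNP nNH nNA.
have coNA : coprime #|N| #|A| by rewrite oA coprimeXr.
have isoA : A \isog A / N := quotient_isog nNA (coprime_TIg coNA).
split=> //; rewrite -?(exponent_isog isoA) -?(card_isog isoA) ?coprime_morphl
  ?quotient_norms ?quotient_pgroup ?quotient_nil //.
move=> aN /setD1P[ntaN /morphimP[a nNa Aa defaN]]; rewrite {aN}defaN in ntaN *.
have nta : a != 1 by apply: contraNneq ntaN => ->; rewrite morph1.
have coNa : coprime #|N| #|<[a]>|.
  by apply: coprime_dvdr coNq; rewrite -orderE -expA dvdn_exponent.
have quo_cent (X : {group gT}) :
    X \subset 'N(N) -> A \subset 'N(X) -> 'C_X[a] / N = 'C_(X / N)[coset N a].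
  move=> nNX nXA; rewrite -cent_cycle coprime_norm_quotient_cent ?cycle_subG ?(subsetP nXA) //.
  by rewrite quotient_cycle // cent_cycle.
rewrite -quo_cent // -quo_cent // -quotientR ?(subset_trans (subsetIl _ _)) //.
by rewrite cCPCH ?quotient1 // !inE nta.
Qed.

Section Reduction.
Variables (gT : finGroupType) (q p : nat) (A P H : {group gT}).
Hypothesis cfa : commuting_fixed_action q p A P H.
Hypothesis IH : forall (rT : finGroupType) (A1 P1 H1 : {group rT}),
  #|P1| + #|H1| < #|P| + #|H| -> commuting_fixed_action q p A1 P1 H1 -> [~: P1, H1] = 1.

Let coPH : coprime #|P| #|H| := pnat_coprime (cfa_pgroup cfa) (cfa_p'group cfa).
Let nPA := cfa_normAP cfa.
Let nHA := cfa_normAH cfa.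
Let nPH := cfa_normHP cfa.

Lemma commg_eq1_proper_sub (H1 : {group gT}) :
  H1 \subset H -> A \subset 'N(H1) -> H1 :!=: H -> [~: P, H1] = 1.
Proof.
move=> sH1H nH1A neH1; apply: IH; first by rewrite ltn_add2l proper_card // properEneq neH1.
exact: commuting_fixed_actionS cfa (subxx P) sH1H nPA nH1A (subset_trans sH1H nPH).
Qed.

Lemma commg_sub_coprime_quotient (N : {group gT}) :
    coprime #|N| q -> solvable N -> N :!=: 1 -> (N \subset P) || (N \subset H) ->
    P \subset 'N(N) -> H \subset 'N(N) -> A \subset 'N(N) ->
  [~: P, H] \subset N.
Proof.
move=> coNq solN ntN sN nNP nNH nNA.
have ltPHN : #|P / N| + #|H / N| < #|P| + #|H|.
  case/orP: sN => sN; [rewrite -addSn | rewrite -addnS];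
    by rewrite leq_add ?leq_quotient ?ltn_quotient.
have := IH ltPHN (commuting_fixed_action_quotient cfa coNq solN nNP nNH nNA).
rewrite -quotientR // => /eqP; rewrite -subG1 quotient_sub1 //.
by rewrite (subset_trans _ nNP) // commg_subl.
Qed.

Lemma commg_eq1_not_pgroup r : prime r -> r %| #|H| -> ~~ r.-group H -> [~: P, H] = 1.
Proof.
move=> r_pr r_dvdH not_rH; have defH := dprodW (nilpotent_pcoreC r (cfa_nilpotent cfa)).
have cPO (pi : nat_pred) : 'O_pi(H) :!=: H -> [~: P, 'O_pi(H)] = 1.
  by apply: commg_eq1_proper_sub; [apply: pcore_sub | apply: char_norm_trans (pcore_char _ _) nHA].
apply/commG1P; rewrite -defH centM subsetI; apply/andP; split; apply/commG1P/cPO.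
  by apply: contraNneq not_rH => <-; apply: pcore_pgroup.
apply: contraTneq r_dvdH => defH'; have: r^'.-group H by rewrite -defH' pcore_pgroup.
by move/pgroupP/(_ r r_pr) => r'r; apply/negP => /r'r; rewrite !inE eqxx.
Qed.

Lemma commg_eq1_cent_ne1 : 'C_H(P) != 1 -> [~: P, H] = 1.
Proof.
move=> ntC; have sCH : 'C_H(P) \subset H := subsetIl _ _.
have nCP : P \subset 'N('C_H(P)) by rewrite cents_norm // centsC subsetIr.
have nCH : H \subset 'N('C_H(P)) by rewrite normsI ?normG ?norms_cent.
have nCA : A \subset 'N('C_H(P)) := normsI nHA (norms_cent nPA).
have solC : solvable 'C_H(P) := nilpotent_sol (nilpotentS sCH (cfa_nilpotent cfa)).
have sRC : [~: P, H] \subset 'C_H(P).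
  apply: commg_sub_coprime_quotient (coprimeSg sCH (cfa_coprimeH cfa)) solC ntC _ nCP nCH nCA.
  by rewrite sCH orbT.
apply/trivgP; rewrite -(coprime_TIg coPH) subsetI commg_subl nPH.
exact: subset_trans sRC sCH.
Qed.

Lemma abelem_of_cent_eq1 (r : nat) : r.-group H -> 'C_H(P) = 1 -> r.-abelem H.
Proof.
move=> rH tiCHP; rewrite -trivg_Phi //; apply: contraT => ntPhi.
have sPhiH := Phi_sub H; have nPhiA := char_norm_trans (Phi_char H) nHA.
have ltPhiH : 'Phi(H) :!=: H by rewrite proper_neq // Phi_proper // (subG1_contra sPhiH).
have /commG1P := commg_eq1_proper_sub sPhiH nPhiA ltPhiH.
by rewrite centsC => cPhiP; case/negP: ntPhi; rewrite -subG1 -tiCHP subsetI sPhiH.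
Qed.

Lemma commg_eq1_Phi_ne1 : 'Phi(P) != 1 -> [~: P, H] = 1.
Proof.
move=> ntPhi; have pP := cfa_pgroup cfa; have sPhiP := Phi_sub P.
have solPhi : solvable 'Phi(P) := nilpotent_sol (pgroup_nil (pgroupS sPhiP pP)).
apply: coprime_commg_sub_Phi pP nPH coPH _.
apply: commg_sub_coprime_quotient (coprimeSg sPhiP (cfa_coprimeP cfa)) solPhi ntPhi _ _ _ _.
- by rewrite sPhiP.
- exact: normal_norm (Phi_normal P).
- exact: char_norm_trans (Phi_char P) nPH.
exact: char_norm_trans (Phi_char P) nPA.
Qed.

Lemma commg_eq1_commg_proper : abelian P -> [~: P, H] != P -> [~: P, H] = 1.
Proof.
move=> abP neRP; have sRP : [~: P, H] \subset P by rewrite commg_subl.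
have: [~: [~: P, H], H] = 1.
  apply: IH; first by rewrite ltn_add2r proper_card // properEneq neRP.
  exact: commuting_fixed_actionS cfa sRP (subxx H) (normsR nPA nHA) nHA (commg_normr H P).
move/commG1P => cRH; rewrite -(coprime_abel_cent_TI nPH coPH abP).
by apply/esym/setIidPl.
Qed.

Lemma commg_eq1_by_reduction : [~: P, H] = 1.
Proof.
case: (cfa) => q_pr expA oA coPq coHq _ _ _ _ pP _ _ cCPCH.
have [-> | ntP] := eqsVneq P 1; first by rewrite comm1G.
have [-> | ntH] := eqsVneq H 1; first by rewrite commG1.
have r_pr : prime (pdiv #|H|) by rewrite pdiv_prime ?cardG_gt1.
have [rH | not_rH] := boolP ((pdiv #|H|).-group H); last first.
  exact: commg_eq1_not_pgroup r_pr (pdiv_dvd _) not_rH.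
have [tiCHP | ] := eqVneq 'C_H(P) 1; last exact: commg_eq1_cent_ne1.
have abelH := abelem_of_cent_eq1 rH tiCHP.
have [PhiP1 | ] := eqVneq 'Phi(P) 1; last exact: commg_eq1_Phi_ne1.
have abP : abelian P by apply: (@abelem_abelian _ p); rewrite -trivg_Phi ?PhiP1.
have [RP | ] := eqVneq [~: P, H] P; last exact: commg_eq1_commg_proper.
have tiCPH : 'C_P(H) = 1 by rewrite -{1}RP coprime_abel_cent_TI.
case: (critical_configuration_false q_pr expA oA r_pr abP abelH coPH coPq coHq
  nPA nHA nPH tiCPH ntP _ cCPCH) => // H1 sH1H nH1A neH1.
apply/trivgP; rewrite -tiCHP subsetI sH1H centsC; apply/commG1P.
exact: commg_eq1_proper_sub.
Qed.

End Reduction.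

Theorem commuting_fixed_action_commg (gT : finGroupType) q p (A P H : {group gT}) :
  commuting_fixed_action q p A P H -> [~: P, H] = 1.
Proof.
move: {2}(#|P| + #|H|).+1 (ltnSn (#|P| + #|H|)) => n.
elim: n gT A P H => // n IHn gT A P H ltPHn cfa.
apply: commg_eq1_by_reduction cfa _ => rT A1 P1 H1 lt1.
exact: IHn (leq_trans lt1 ltPHn).
Qed.

Lemma commuting_fixed_action_sdpair (aT rT : finGroupType) (q p : nat)
    (A : {group aT}) (G P H : {group rT}) (to : groupAction A G) :
    prime q -> exponent A = q -> #|A| = (q ^ 3)%N -> coprime #|G| q ->
    P \subset G -> H \subset G -> H \subset 'N(P) ->
    [acts A, on P | to] -> [acts A, on H | to] ->
    prime p -> p.-group P -> nilpotent H -> p^'.-group H ->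
    (forall a, a \in A^# -> [~: 'C_(P | to)[a], 'C_(H | to)[a]] = 1) ->
  commuting_fixed_action q p (sdpair2 to @* A) (sdpair1 to @* P) (sdpair1 to @* H).
Proof.
move=> q_pr expA oA coGq sPG sHG nPH actsP actsH p_pr pP nilH p'H cCPCH.
have inj1 := injm_sdpair1 to; have inj2 := injm_sdpair2 to.
split; rewrite ?exponent_injm ?card_injm ?morphim_norms ?morphim_pgroup ?morphim_nil
  -?actsEsd ?(coprimeSg sPG) ?(coprimeSg sHG) //.
move=> a' /setD1P[nta' /morphimP[a _ Aa defa']]; rewrite {a'}defa' in nta' *.
have nta : a != 1 by apply: contraNneq nta' => ->; rewrite morph1.
have gacentE (X : {group rT}) : X \subset G ->
    sdpair1 to @* 'C_(X | to)[a] = 'C_(sdpair1 to @* X)[sdpair2 to a].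
  by move=> sXG; rewrite gacentEsd morphim_setIpre morphim_set1 // cent_set1.
rewrite -!gacentE // -morphimR ?(subset_trans (subsetIl _ _)) //.
by rewrite cCPCH ?morphim1 // !inE nta.
Qed.

Theorem lemma2p5 (aT rT : finGroupType) (q p : nat)
    (A : {group aT}) (G P H : {group rT}) (to : groupAction A G) :
  prime q -> exponent A = q -> #|A| = (q ^ 3)%N ->
  coprime #|G| q ->
  P * H = G ->
  [acts A, on P | to] -> [acts A, on H | to] ->
  prime p -> p.-group P -> P <| G ->
  nilpotent H -> p^'.-group H ->
  (forall a, a \in A^# -> [~: 'C_(P | to)[a], 'C_(H | to)[a]] = 1) ->
  [~: P, H] = 1.
Proof.
move=> q_pr expA oA coGq defG actsP actsH p_pr pP nPG nilH p'H cCPCH.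
have sPG : P \subset G by rewrite -defG mulG_subl.
have sHG : H \subset G by rewrite -defG mulG_subr.
have nPH : H \subset 'N(P) := subset_trans sHG (normal_norm nPG).
have := commuting_fixed_action_commg (commuting_fixed_action_sdpair
  q_pr expA oA coGq sPG sHG nPH actsP actsH p_pr pP nilH p'H cCPCH).
have sRG : [~: P, H] \subset G by rewrite (subset_trans (commg_sub _ _)) // join_subG sPG.
by rewrite -morphimR // => /eqP; rewrite morphim_injm_eq1 ?injm_sdpair1 // => /eqP.
Qed.
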